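(* Let $(X,d_X)$ be a proper, doubling metric space and $p\in X$. Assume there is an open neighborhood $V$ of $p$ such that $X$ is uniformly comparable $\eta$-self-quasisymmetric at the points of a dense subset of $V$. Then $X$ admits an $\eta'$-quasisymmetric embedding into every weak tangent in $WT_p(X)$, where $\eta'(t)=1/\eta^{-1}(1/t)$.
   Context: $\eta$ is a homeomorphism of $[0,\infty)$; a homeomorphism $f$ (onto its image) is $\eta$-quasisymmetric if $d(f(x),f(y))/d(f(x),f(z))\le\eta(d(x,y)/d(x,z))$ for $x\ne z$. $X$ is comparable $\eta$-self-quasisymmetric at $x$ if there are $r_x>0$ and $C_x>0$ such that for every $0<r<r_x$ there is a subset $U\subset B(x,r)$ with $x\in U$, $r/C_x\le\operatorname{diam}U\le C_xr$, and an $\eta$-quasisymmetric homeomorphism from $U$ onto $X$. It is uniformly comparable $\eta$-self-quasisymmetric on a set $A$ if this holds for all $x\in A$ with constants $r_x=r_0$ and $C_x=C$ independent of $x$. Proper: closed balls compact; doubling: every set of diameter $d$ covered by a bounded number of sets of diameter $\le d/2$. A weak tangent of $X$ at $p$ is a pointed Gromov–Hausdorff limit of $(X,p_n,d_X/\lambda_n)$ with $\lambda_n\to0^+$, $p_n\to p$ (pointed GH convergence $(X_n,p_n,d_n)\to(Z,z,d)$, $Z$ complete: for every $r,\varepsilon>0$, for large $n$ there is a map $g:B(p_n,r)\to Z$, $g(p_n)=z$, additive distortion $<\varepsilon$, and $B(z,r-\varepsilon)$ in the $\varepsilon$-neighborhood of $g(B(p_n,r))$); $WT_p(X)$ is the set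 of weak tangents at $p$. *)

From Stdlib Require Import Reals List.
Open Scope R_scope.

Section MetricDefs.
Context {X : Type} (d : X -> X -> R).

Definition is_metric : Prop :=
  (forall x y, 0 <= d x y) /\ (forall x y, d x y = 0 <-> x = y) /\
  (forall x y, d x y = d y x) /\ (forall x y z, d x z <= d x y + d y z).

Definition ball (x : X) (r : R) : X -> Prop := fun y => d x y < r.

Definition is_open (U : X -> Prop) : Prop :=
  forall x, U x -> exists e, 0 < e /\ forall y, d x y < e -> U y.

Definition is_compact (K : X -> Prop) : Prop :=
  forall (I : Type) (U : I -> X -> Prop), (forall i, is_open (U i)) ->
  (forall x, K x -> exists i, U i x) ->
  exists l : list I, forall x, K x -> exists i, In i l /\ U i x.

Definition proper : Prop := forall x r, is_compact (fun y => d x y <= r).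

Definition is_diam (A : X -> Prop) (D : R) : Prop :=
  is_lub (fun t => exists x y, A x /\ A y /\ t = d x y) D.

Definition doubling : Prop :=
  exists N : nat, forall (A : X -> Prop) (D : R), is_diam A D ->
    exists l : list (X -> Prop), (length l <= N)%nat /\
      (forall S, In S l -> forall x y, S x -> S y -> d x y <= D / 2) /\
      (forall x, A x -> exists S, In S l /\ S x).

Definition dense_in (D V : X -> Prop) : Prop :=
  forall v, V v -> forall e, 0 < e -> exists x, D x /\ d v x < e.

Definition complete : Prop :=
  forall u : nat -> X,
    (forall e, 0 < e -> exists N, forall m n, (N <= m)%nat -> (N <= n)%nat -> d (u m) (u n) < e) ->
    exists l, forall e, 0 < e -> exists N, forall n, (N <= n)%nat -> d (u n) l < e.

End MetricDefs.

Definition cont_nonneg (g : R -> R) : Prop :=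
  forall t, 0 <= t -> forall e, 0 < e -> exists de, 0 < de /\
    forall s, 0 <= s -> Rabs (s - t) < de -> Rabs (g s - g t) < e.

Definition homeo_pair (eta etai : R -> R) : Prop :=
  (forall t, 0 <= t -> 0 <= eta t) /\ (forall s, 0 <= s -> 0 <= etai s) /\
  (forall t, 0 <= t -> etai (eta t) = t) /\ (forall s, 0 <= s -> eta (etai s) = s) /\
  cont_nonneg eta /\ cont_nonneg etai.

Definition eta_prime (etai : R -> R) (t : R) : R :=
  if Req_EM_T t 0 then 0 else / etai (/ t).

Section QS.
Context {X Y : Type} (dX : X -> X -> R) (dY : Y -> Y -> R).

Definition qs_embedding (A : X -> Prop) (f : X -> Y) (eta : R -> R) : Prop :=
  (forall x y, A x -> A y -> f x = f y -> x = y) /\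
  (forall x, A x -> forall e, 0 < e -> exists de, 0 < de /\
     forall y, A y -> dX x y < de -> dY (f x) (f y) < e) /\
  (forall x, A x -> forall e, 0 < e -> exists de, 0 < de /\
     forall y, A y -> dY (f x) (f y) < de -> dX x y < e) /\
  (forall x y z, A x -> A y -> A z -> x <> z ->
     dY (f x) (f y) / dY (f x) (f z) <= eta (dX x y / dX x z)).

Definition qs_homeo_onto (A : X -> Prop) (f : X -> Y) (eta : R -> R) : Prop :=
  qs_embedding A f eta /\ (forall w, exists u, A u /\ f u = w).
End QS.

Section SelfQS.
Context {X : Type} (d : X -> X -> R) (eta : R -> R).

Definition comparable_self_qs_data (x : X) (r0 C : R) : Prop :=
  0 < r0 /\ 0 < C /\
  forall r, 0 < r -> r < r0 ->
    exists (U : X -> Prop) (f : X -> X),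
      (forall y, U y -> ball d x r y) /\ U x /\
      (exists D, is_diam d U D /\ r / C <= D /\ D <= C * r) /\
      qs_homeo_onto d d U f eta.

Definition comparable_self_qs (x : X) : Prop :=
  exists r0 C, comparable_self_qs_data x r0 C.

Definition unif_comparable_self_qs (A : X -> Prop) : Prop :=
  exists r0 C, forall x, A x -> comparable_self_qs_data x r0 C.
End SelfQS.

(* pointed Gromov-Hausdorff convergence of (X, p_n, d / lam_n) to (Z, z, dZ) *)
Definition pGH_conv {X Z : Type} (d : X -> X -> R) (lam : nat -> R)
  (ps : nat -> X) (dZ : Z -> Z -> R) (z : Z) : Prop :=
  forall r e, 0 < r -> 0 < e -> exists N, forall n, (N <= n)%nat ->
    exists g : X -> Z,
      g (ps n) = z /\
      (exists del, del < e /\ forall a b, d (ps n) a / lam n < r -> d (ps n) b / lam n < r ->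
          Rabs (dZ (g a) (g b) - d a b / lam n) <= del) /\
      (forall w, dZ z w < r - e -> exists a, d (ps n) a / lam n < r /\ dZ w (g a) < e).

Definition weak_tangent {X Z : Type} (d : X -> X -> R) (p : X)
  (dZ : Z -> Z -> R) (z : Z) : Prop :=
  is_metric dZ /\ complete dZ /\
  exists (lam : nat -> R) (ps : nat -> X),
    (forall n, 0 < lam n) /\ Un_cv lam 0 /\ Un_cv (fun n => d (ps n) p) 0 /\
    pGH_conv d lam ps dZ z.

(* Near every base point p_n of the rescalings, X contains a set U of diameter comparable
   to the scale lam_n which is an eta-quasisymmetric copy of X; the inverse maps
   F_n : X -> U are eta'-quasisymmetric.  Rescaled by lam_n and composed with the
   Gromov-Hausdorff approximations they give maps phi_n : X -> Z whose distances satisfy,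
   up to o(1), the eta'-quasisymmetry inequality together with an upper bound C and a
   lower bound 1/(4C) at some point.  X is bounded (it is a quasisymmetric image of the
   bounded set U) and proper, hence totally bounded, and the phi_n land in a totally bounded
   ball of Z; so a diagonal (Arzela-Ascoli) argument gives a pointwise limit f : X -> Z.
   The inequalities pass to the limit and force f to be an eta'-quasisymmetric embedding. *)

From Stdlib Require Import Reals Lra Lia List ClassicalEpsilon Classical.
Open Scope R_scope.

Lemma Rabs_le_bounds (x a : R) : Rabs x <= a -> - a <= x <= a.
Proof. unfold Rabs; destruct (Rcase_abs x); lra. Qed.

Lemma Rdiv_ge0 (a b : R) : 0 <= a -> 0 < b -> 0 <= a / b.
Proof. intros Ha Hb. apply Rmult_le_pos; [exact Ha|left; apply Rinv_0_lt_compat, Hb]. Qed.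

Lemma Rdiv_lt_iff (x c L : R) : 0 < L -> x / L < c <-> x < c * L.
Proof.
  intros HL. split; intros H.
  - replace x with (x / L * L) by (field; lra). apply Rmult_lt_compat_r; assumption.
  - apply (Rmult_lt_reg_r L); [exact HL|]. replace (x / L * L) with x by (field; lra). exact H.
Qed.

Lemma Rdiv_le_iff (x c L : R) : 0 < L -> x / L <= c <-> x <= c * L.
Proof.
  intros HL. split; intros H.
  - replace x with (x / L * L) by (field; lra). apply Rmult_le_compat_r; lra.
  - apply (Rmult_le_reg_r L); [exact HL|]. replace (x / L * L) with x by (field; lra). exact H.
Qed.

Lemma Rdiv_ge_iff (x c L : R) : 0 < L -> c <= x / L <-> c * L <= x.
Proof.
  intros HL. split; intros H.
  - replace x with (x / L * L) by (field; lra). apply Rmult_le_compat_r; lra.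
  - apply (Rmult_le_reg_r L); [exact HL|]. replace (x / L * L) with x by (field; lra). exact H.
Qed.

Lemma inv_succ_le m n : (m <= n)%nat -> / (INR n + 1) <= / (INR m + 1).
Proof.
  intros Hmn. apply le_INR in Hmn. pose proof (pos_INR m). apply Rinv_le_contravar; lra.
Qed.

Lemma inv_succ_small e : 0 < e -> exists N, / (INR N + 1) < e.
Proof.
  intros He. destruct (archimed_cor1 e He) as (N & HN & HN0). exists N.
  eapply Rle_lt_trans; [|exact HN]. apply lt_0_INR in HN0. apply Rinv_le_contravar; lra.
Qed.

Lemma cont_nonneg_IVT (g : R -> R) (s t y : R) :
  cont_nonneg g -> 0 <= s <= t -> (g s - y) * (g t - y) <= 0 ->
  exists u, s <= u <= t /\ g u = y.
Proof.
  intros Hg Hst Hsign.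
  set (h := fun x => g (Rabs x) - y).
  assert (Hh : continuity h).
  { intros x e He. destruct (Hg (Rabs x) (Rabs_pos x) e He) as (de & Hde & Hx).
    exists de; split; [exact Hde|]. intros x' [_ Hx'].
    simpl in *. unfold h, R_dist in *. replace (g (Rabs x') - y - (g (Rabs x) - y))
      with (g (Rabs x') - g (Rabs x)) by ring.
    apply Hx; [apply Rabs_pos|]. eapply Rle_lt_trans; [apply Rabs_triang_inv2|exact Hx']. }
  destruct (IVT_cor h s t Hh (proj2 Hst)) as (u & Hu & Hhu).
  { unfold h. rewrite !Rabs_right by lra. exact Hsign. }
  exists u. split; [exact Hu|]. unfold h in Hhu. rewrite Rabs_right in Hhu by lra. lra.
Qed.

Section HomeoOfHalfLine.
Variables eta etai : R -> R.
Hypothesis Heta : homeo_pair eta etai.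

Lemma homeo_inj s t : 0 <= s -> 0 <= t -> eta s = eta t -> s = t.
Proof.
  destruct Heta as (_ & _ & Hie & _). intros Hs Ht E.
  now rewrite <- (Hie s Hs), <- (Hie t Ht), E.
Qed.

Lemma homeo_eta0 : eta 0 = 0.
Proof.
  destruct Heta as (Hp & Hip & Hie & Hei & Hc & _).
  destruct (Rle_lt_or_eq_dec _ _ (Hp 0 (Rle_refl 0))) as [Ha|]; [exfalso|auto].
  set (a := eta 0) in *.
  set (t1 := etai (a / 2)). set (t2 := etai (2 * a)).
  assert (E1 : eta t1 = a / 2) by (apply Hei; lra).
  assert (E2 : eta t2 = 2 * a) by (apply Hei; lra).
  (* [a] lies between [eta t1] and [eta t2], so by the IVT it is [eta u] for some [u > 0] *)
  assert (Hpos : forall t, 0 <= t -> eta t <> a -> 0 < t).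
  { intros t Ht Hne. destruct Ht as [|<-]; [auto|contradiction]. }
  assert (P1 : 0 < t1) by (apply Hpos; [apply Hip; lra|lra]).
  assert (P2 : 0 < t2) by (apply Hpos; [apply Hip; lra|lra]).
  assert (Hzero : forall u, 0 < u -> eta u <> a).
  { intros u Hu E. apply (homeo_inj u 0) in E; lra. }
  destruct (Rle_dec t1 t2).
  - destruct (cont_nonneg_IVT eta t1 t2 a Hc) as (u & Hu & E); [lra|rewrite E1, E2; nra|].
    apply (Hzero u); lra.
  - destruct (cont_nonneg_IVT eta t2 t1 a Hc) as (u & Hu & E); [lra|rewrite E1, E2; nra|].
    apply (Hzero u); lra.
Qed.

Lemma homeo_lt s t : 0 <= s -> s < t -> eta s < eta t.
Proof.
  pose proof Heta as (Hp & _ & _ & _ & Hc & _). intros Hs Hst.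
  destruct (Rlt_le_dec (eta s) (eta t)) as [|Hle]; [auto|exfalso].
  destruct (cont_nonneg_IVT eta 0 s (eta t) Hc) as (u & Hu & E).
  - lra.
  - rewrite homeo_eta0. pose proof (Hp t ltac:(lra)). nra.
  - apply homeo_inj in E; lra.
Qed.

Lemma homeo_le s t : 0 <= s -> s <= t -> eta s <= eta t.
Proof.
  intros Hs [Hst|<-]; [left; apply homeo_lt|right]; auto.
Qed.

Lemma homeo_inv_lt s t : 0 <= s -> s < t -> etai s < etai t.
Proof.
  destruct Heta as (_ & Hip & _ & Hei & _). intros Hs Hst.
  destruct (Rlt_le_dec (etai s) (etai t)) as [|Hge]; [auto|exfalso].
  assert (eta (etai t) <= eta (etai s)) by (apply homeo_le; [apply Hip; lra|exact Hge]).
  rewrite !Hei in H by lra. lra.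
Qed.

Lemma homeo_inv_le s t : 0 <= s -> s <= t -> etai s <= etai t.
Proof.
  intros Hs [Hst|<-]; [left; apply homeo_inv_lt|right]; auto.
Qed.

Lemma homeo_inv_pos s : 0 < s -> 0 < etai s.
Proof.
  destruct Heta as (_ & Hip & _ & Hei & _). intros Hs.
  destruct (Hip s ltac:(lra)) as [|E]; [auto|].
  pose proof (Hei s ltac:(lra)) as Es. rewrite <- E, homeo_eta0 in Es. lra.
Qed.

Lemma eta_prime_pos t : 0 < t -> 0 < eta_prime etai t.
Proof.
  intros Ht. unfold eta_prime. destruct (Req_EM_T t 0); [lra|].
  apply Rinv_0_lt_compat, homeo_inv_pos, Rinv_0_lt_compat, Ht.
Qed.

Lemma eta_prime_ge0 t : 0 <= t -> 0 <= eta_prime etai t.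
Proof.
  intros [Ht|<-]; [left; apply eta_prime_pos, Ht|].
  unfold eta_prime. destruct (Req_EM_T 0 0); lra.
Qed.

Lemma eta_prime_le s t : 0 < s -> s <= t -> eta_prime etai s <= eta_prime etai t.
Proof.
  intros Hs Hst. unfold eta_prime.
  destruct (Req_EM_T s 0); [lra|]. destruct (Req_EM_T t 0); [lra|].
  apply Rinv_le_contravar; [apply homeo_inv_pos, Rinv_0_lt_compat; lra|].
  apply homeo_inv_le; [left; apply Rinv_0_lt_compat; lra|].
  apply Rinv_le_contravar; lra.
Qed.

Lemma eta_prime_small e : 0 < e ->
  exists de, 0 < de /\ forall t, 0 <= t -> t < de -> eta_prime etai t < e.
Proof.
  destruct Heta as (_ & _ & Hie & _). intros He.
  assert (Hpos : 0 < eta (/ e)).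
  { rewrite <- homeo_eta0. apply homeo_lt; [lra|apply Rinv_0_lt_compat, He]. }
  exists (/ eta (/ e)). split; [apply Rinv_0_lt_compat, Hpos|].
  intros t [Ht|<-] Htd; unfold eta_prime; destruct (Req_EM_T _ 0); try lra.
  assert (Hlt : eta (/ e) < / t).
  { rewrite <- (Rinv_inv (eta (/ e))). apply Rinv_lt_contravar; [|exact Htd].
    apply Rmult_lt_0_compat; [exact Ht|apply Rinv_0_lt_compat, Hpos]. }
  assert (/ e < etai (/ t)).
  { rewrite <- (Hie (/ e)) at 1 by (left; apply Rinv_0_lt_compat, He).
    apply homeo_inv_lt; [left; exact Hpos|exact Hlt]. }
  rewrite <- (Rinv_inv e). apply Rinv_lt_contravar; [|exact H].
  pose proof (Rinv_0_lt_compat e He). apply Rmult_lt_0_compat; lra.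
Qed.

End HomeoOfHalfLine.

Definition totally_bounded {X : Type} (d : X -> X -> R) (S : X -> Prop) : Prop :=
  forall e, 0 < e -> exists l : list X, forall x, S x -> exists q, In q l /\ d q x < e.

Section MetricSpace.
Context {X : Type} (d : X -> X -> R).
Hypothesis Hd : is_metric d.

Lemma dist_ge0 x y : 0 <= d x y.
Proof. apply Hd. Qed.

Lemma dist_xx x : d x x = 0.
Proof. apply Hd; reflexivity. Qed.

Lemma dist_sym x y : d x y = d y x.
Proof. apply Hd. Qed.

Lemma dist_tri x y z : d x z <= d x y + d y z.
Proof. apply Hd. Qed.

Lemma dist_pos x y : x <> y -> 0 < d x y.
Proof.
  intros Hxy. destruct (dist_ge0 x y) as [|E]; [auto|].
  exfalso. apply Hxy, Hd. now symmetry.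
Qed.

Lemma diam_ub U D : is_diam d U D -> forall u v, U u -> U v -> d u v <= D.
Proof. intros [Hub _] u v Hu Hv. apply Hub. now exists u, v. Qed.

Lemma diam_approx U D : is_diam d U D -> forall t, t < D -> exists u v, U u /\ U v /\ t < d u v.
Proof.
  intros [_ Hlub] t Ht. apply NNPP. intros Hno.
  enough (D <= t) by lra. apply Hlub. intros s (u & v & Hu & Hv & ->).
  apply Rnot_lt_le. intros Hlt. apply Hno. now exists u, v.
Qed.

Lemma diam_far_point U D : is_diam d U D -> 0 < D -> forall y, exists u, U u /\ D / 4 < d y u.
Proof.
  intros HD HD0 y. destruct (diam_approx U D HD (D / 2) ltac:(lra)) as (u & v & Hu & Hv & Huv).
  pose proof (dist_tri u y v). rewrite (dist_sym u y) in H.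
  destruct (Rlt_le_dec (D / 4) (d y u)); [exists u|exists v]; split; auto; lra.
Qed.

Lemma proper_closed_ball_net : proper d -> forall x r e, 0 < e ->
  exists l : list X, (forall q, In q l -> d x q <= r) /\
    forall y, d x y <= r -> exists q, In q l /\ d q y < e.
Proof.
  intros Hproper x r e He.
  destruct (Hproper x r {q | d x q <= r} (fun q y => d (proj1_sig q) y < e)) as [l Hl].
  - intros [q Hq] y Hy. simpl in Hy. exists (e - d q y). split; [lra|]. intros y' Hy'.
    pose proof (dist_tri q y y'). simpl. lra.
  - intros y Hy. exists (exist _ y Hy). simpl. rewrite dist_xx. exact He.
  - exists (map (@proj1_sig _ _) l). split.
    + intros q Hq. apply in_map_iff in Hq. destruct Hq as ([q' Hq'] & <- & _). exact Hq'.
    + intros y Hy. destruct (Hl y Hy) as (q & Hq & Hqy).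
      exists (proj1_sig q). split; [apply in_map, Hq|exact Hqy].
Qed.

Lemma bounded_proper_totally_bounded (x0 : X) M : proper d -> (forall a b, d a b <= M) ->
  totally_bounded d (fun _ => True).
Proof.
  intros Hproper HM e He. destruct (proper_closed_ball_net Hproper x0 M e He) as (l & _ & Hl).
  exists l. intros y _. apply Hl, HM.
Qed.

End MetricSpace.

Definition qs_dominated {X : Type} (d : X -> X -> R) (eta' : R -> R) (rho : X -> X -> R) : Prop :=
  forall a b c, a <> c -> rho a b <= eta' (d a b / d a c) * rho a c.

Lemma qs_dominated_small {X : Type} (d : X -> X -> R) eta etai (C : R) (x c : X) :
  is_metric d -> homeo_pair eta etai -> 0 < C -> x <> c -> forall e, 0 < e ->
  exists de, 0 < de /\
    forall rho, qs_dominated d (eta_prime etai) rho -> (forall a b, rho a b <= C) ->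
    forall y, d x y < de -> rho x y < e.
Proof.
  intros Hd Heta HC Hxc e He.
  assert (Hdxc : 0 < d x c) by (apply (dist_pos d Hd), Hxc).
  destruct (eta_prime_small eta etai Heta (e / C)) as (de & Hde & Hsmall);
    [apply Rdiv_lt_0_compat; lra|].
  exists (de * d x c). split; [nra|]. intros rho Hqs Hle y Hxy.
  set (t := d x y / d x c).
  assert (Ht : 0 <= t < de)
    by (split; [apply Rdiv_ge0; [apply (dist_ge0 d Hd)|exact Hdxc]|apply Rdiv_lt_iff; lra]).
  assert (Ht' : eta_prime etai t * C < e).
  { pose proof (Hsmall t (proj1 Ht) (proj2 Ht)) as Hsm.
    apply (Rmult_lt_compat_r C) in Hsm; [|exact HC].
    replace (e / C * C) with e in Hsm by (field; lra). exact Hsm. }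
  pose proof (Rmult_le_compat_l _ _ _ (eta_prime_ge0 eta etai Heta t (proj1 Ht)) (Hle x c)).
  pose proof (Hqs x y c Hxc). fold t in H0. lra.
Qed.

Section Quasisymmetry.
Context {X Y : Type} (dX : X -> X -> R) (dY : Y -> Y -> R) (eta etai : R -> R).
Hypotheses (HdX : is_metric dX) (HdY : is_metric dY) (Heta : homeo_pair eta etai).

Lemma qs_section_bound (A : X -> Prop) (f : X -> Y) (F : Y -> X) :
  qs_embedding dX dY A f eta -> (forall w, A (F w) /\ f (F w) = w) ->
  qs_dominated dY (eta_prime etai) (fun a b => dX (F a) (F b)).
Proof.
  intros (_ & _ & _ & Hqs) HF a b c Hac.
  destruct (HF a) as [Aa Ea], (HF b) as [Ab Eb], (HF c) as [Ac Ec].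
  assert (Hac' : F a <> F c) by (intros E; apply Hac; now rewrite <- Ea, <- Ec, E).
  assert (Hdac : 0 < dY a c) by (apply (dist_pos dY HdY), Hac).
  assert (Hdac' : 0 < dX (F a) (F c)) by (apply (dist_pos dX HdX), Hac').
  destruct (classic (F a = F b)) as [<-|Hab'].
  { rewrite (dist_xx dX HdX). apply Rmult_le_pos; [|lra].
    apply (eta_prime_ge0 eta etai Heta), Rdiv_ge0; [apply (dist_ge0 dY HdY)|exact Hdac]. }
  assert (Hab : a <> b) by (intros <-; contradiction).
  assert (Hdab : 0 < dY a b) by (apply (dist_pos dY HdY), Hab).
  assert (Hdab' : 0 < dX (F a) (F b)) by (apply (dist_pos dX HdX), Hab').
  specialize (Hqs (F a) (F c) (F b) Aa Ac Ab Hab'). rewrite Ea, Eb, Ec in Hqs.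
  assert (Hinv : etai (dY a c / dY a b) <= dX (F a) (F c) / dX (F a) (F b)).
  { destruct Heta as (_ & _ & Hie & _).
    rewrite <- (Hie (dX (F a) (F c) / dX (F a) (F b))) by (apply Rdiv_ge0; lra).
    apply (homeo_inv_le eta etai Heta); [apply Rdiv_ge0; lra|exact Hqs]. }
  assert (Hpos : 0 < etai (dY a c / dY a b))
    by (apply (homeo_inv_pos eta etai Heta), Rdiv_lt_0_compat; lra).
  unfold eta_prime. destruct (Req_EM_T _ 0) as [E|_].
  { exfalso. assert (0 < dY a b / dY a c) by (apply Rdiv_lt_0_compat; lra). lra. }
  rewrite Rinv_div.
  apply (Rmult_le_reg_l (etai (dY a c / dY a b))); [exact Hpos|].
  rewrite <- Rmult_assoc, Rinv_r, Rmult_1_l by lra.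
  apply (Rmult_le_reg_r (/ dX (F a) (F b))); [apply Rinv_0_lt_compat, Hdab'|].
  rewrite Rmult_assoc, Rinv_r, Rmult_1_r by lra. exact Hinv.
Qed.

Lemma qs_onto_bounded (U : X -> Prop) (f : X -> Y) D :
  qs_homeo_onto dX dY U f eta -> is_diam dX U D -> 0 < D ->
  exists M, 0 < M /\ forall a b, dY a b <= M.
Proof.
  intros ((Hinj & _ & _ & Hqs) & Honto) HD HD0.
  destruct (diam_approx dX U D HD 0 HD0) as (u & w & Hu & Hw & Huw).
  assert (Huw' : u <> w) by (intros <-; rewrite (dist_xx dX HdX) in Huw; lra).
  assert (Hfuw : 0 < dY (f u) (f w)) by (apply (dist_pos dY HdY); intros E; apply Huw', Hinj; auto).
  set (K := eta (D / dX u w) * dY (f u) (f w)).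
  assert (HK : forall y, U y -> dY (f u) (f y) <= K).
  { intros y Hy. pose proof (Hqs u y w Hu Hy Hw Huw') as Hy'.
    assert (eta (dX u y / dX u w) <= eta (D / dX u w)).
    { apply (homeo_le eta etai Heta).
      - apply Rdiv_ge0; [apply (dist_ge0 dX HdX)|exact Huw].
      - apply Rmult_le_compat_r; [left; apply Rinv_0_lt_compat, Huw|].
        apply (diam_ub dX U D HD); auto. }
    unfold K. apply (Rmult_le_reg_r (/ dY (f u) (f w))); [apply Rinv_0_lt_compat, Hfuw|].
    rewrite Rmult_assoc, Rinv_r, Rmult_1_r by lra. unfold Rdiv in Hy'. lra. }
  assert (HK0 : 0 < K).
  { apply Rmult_lt_0_compat; [|exact Hfuw]. rewrite <- (homeo_eta0 eta etai Heta).
    apply (homeo_lt eta etai Heta); [lra|apply Rdiv_lt_0_compat; lra]. }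
  exists (2 * K). split; [lra|]. intros a b.
  destruct (Honto a) as (ya & Ha & <-), (Honto b) as (yb & Hb & <-).
  pose proof (dist_tri dY HdY (f ya) (f u) (f yb)). rewrite (dist_sym dY HdY (f ya) (f u)) in H.
  pose proof (HK ya Ha). pose proof (HK yb Hb). lra.
Qed.

End Quasisymmetry.

Lemma self_qs_bounded {X : Type} (d : X -> X -> R) eta etai x r0 C :
  is_metric d -> homeo_pair eta etai -> comparable_self_qs_data d eta x r0 C ->
  exists M, 0 < M /\ forall a b, d a b <= M.
Proof.
  intros Hd Heta (Hr0 & HC & Hdata).
  destruct (Hdata (r0 / 2) ltac:(lra) ltac:(lra)) as (U & f & _ & _ & (D & HD & HDlow & _) & Hf).
  apply (qs_onto_bounded d d eta etai Hd Hd Heta U f D Hf HD).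
  assert (0 < r0 / 2 / C) by (apply Rdiv_lt_0_compat; lra). lra.
Qed.

Lemma pGH_ball_totally_bounded {X Z : Type} (d : X -> X -> R) (dZ : Z -> Z -> R) lam ps z :
  is_metric d -> proper d -> is_metric dZ -> (forall n, 0 < lam n) -> pGH_conv d lam ps dZ z ->
  forall r, 0 < r -> totally_bounded dZ (fun w => dZ z w < r).
Proof.
  intros Hd Hproper HdZ Hlam Hgh r Hr e He.
  set (e' := Rmin (e / 3) (1 / 2)).
  assert (He' : 0 < e' <= e / 3 /\ e' <= 1 / 2)
    by (unfold e'; split; [split; [apply Rmin_glb_lt|apply Rmin_l]|apply Rmin_r]; lra).
  clearbody e'.
  destruct (Hgh (r + 2) e' ltac:(lra) ltac:(lra)) as [N HN].
  destruct (HN N (le_n N)) as (g & Hgz & (del & Hdel & Hg) & Hdense).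
  assert (HL : 0 < lam N) by apply Hlam.
  destruct (proper_closed_ball_net d Hd Hproper (ps N) ((r + 1) * lam N) (e' * lam N))
    as (l & Hlball & Hl); [nra|].
  exists (map g l). intros w Hw.
  destruct (Hdense w ltac:(lra)) as (a & Ha & Hwa).
  assert (Hcenter : d (ps N) (ps N) / lam N < r + 2) by (rewrite (dist_xx d Hd); unfold Rdiv; lra).
  assert (Haball : d (ps N) a <= (r + 1) * lam N).
  { apply Rdiv_le_iff; [exact HL|].
    pose proof (Hg (ps N) a Hcenter Ha) as Hpa. rewrite Hgz in Hpa. apply Rabs_le_bounds in Hpa.
    pose proof (dist_tri dZ HdZ z w (g a)). lra. }
  destruct (Hl a Haball) as (q & Hq & Hqa).
  exists (g q). split; [apply in_map, Hq|].
  assert (Hqball : d (ps N) q / lam N < r + 2)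
    by (apply Rdiv_lt_iff; [exact HL|]; pose proof (Hlball q Hq); nra).
  pose proof (Hg q a Hqball Ha) as Hqa'. apply Rabs_le_bounds in Hqa'.
  assert (d q a / lam N < e') by (apply Rdiv_lt_iff; [exact HL|lra]).
  pose proof (dist_tri dZ HdZ (g q) (g a) w). rewrite (dist_sym dZ HdZ (g a) w) in H0. lra.
Qed.

(* [rho] models the rescaled distance [d (F a) (F b) / lam] of an eta'-quasisymmetric
   map [F] of X onto a set of diameter between [lam / C] and [C lam] inside a ball of
   radius [2 lam] around [p_n], and [phi] is [F] followed by a Gromov-Hausdorff
   approximation of (X, p_n, d / lam) by (Z, z) of error [eps <= 1]; hence the radius 3. *)
Definition tangent_approximant {X Z : Type} (d : X -> X -> R) (dZ : Z -> Z -> R) (z : Z)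
  (eta' : R -> R) (C eps : R) (phi : X -> Z) (rho : X -> X -> R) : Prop :=
  (forall a b, 0 <= rho a b) /\
  qs_dominated d eta' rho /\
  (forall a b, rho a b <= C) /\
  (forall a, exists c, a <> c /\ / (4 * C) <= rho a c) /\
  (forall a b, Rabs (dZ (phi a) (phi b) - rho a b) <= eps) /\
  (forall a, dZ z (phi a) < 3).

Lemma tangent_approximant_of_qs_copy {X Z : Type} (d : X -> X -> R) (dZ : Z -> Z -> R) z
  eta etai (U : X -> Prop) (f : X -> X) (g : X -> Z) (y0 x : X) (lam C DU eps del : R) :
  is_metric d -> homeo_pair eta etai -> 0 < lam -> 0 < C -> eps <= 1 -> del < eps ->
  d y0 x < lam -> (forall u, U u -> ball d x lam u) ->
  is_diam d U DU -> lam / C <= DU <= C * lam -> qs_homeo_onto d d U f eta ->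
  g y0 = z ->
  (forall a b, d y0 a / lam < 3 -> d y0 b / lam < 3 ->
     Rabs (dZ (g a) (g b) - d a b / lam) <= del) ->
  exists phi rho, tangent_approximant d dZ z (eta_prime etai) C eps phi rho.
Proof.
  intros Hd Heta Hlam HC Heps Hdel Hy0 HU HDU [HDlow HDup] [Hf Honto] Hgz Hg.
  destruct (choice (fun w u => U u /\ f u = w) Honto) as [F HF].
  pose proof Hf as (Hinj & _).
  assert (HFball : forall a, d y0 (F a) / lam < 2).
  { intros a. apply Rdiv_lt_iff; [exact Hlam|].
    pose proof (HU (F a) (proj1 (HF a))). unfold ball in H.
    pose proof (dist_tri d Hd y0 x (F a)). lra. }
  assert (HDU0 : 0 < DU) by (assert (0 < lam / C) by (apply Rdiv_lt_0_compat; lra); lra).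
  exists (fun a => g (F a)), (fun a b => d (F a) (F b) / lam).
  split; [|split; [|split; [|split; [|split]]]].
  - intros a b. apply Rdiv_ge0; [apply (dist_ge0 d Hd)|exact Hlam].
  - intros a b c Hac. unfold Rdiv at 2 3. rewrite <- Rmult_assoc.
    apply Rmult_le_compat_r; [left; apply Rinv_0_lt_compat, Hlam|].
    apply (qs_section_bound d d eta etai Hd Hd Heta U f F Hf HF a b c Hac).
  - intros a b. apply Rdiv_le_iff; [exact Hlam|].
    pose proof (diam_ub d U DU HDU (F a) (F b) (proj1 (HF a)) (proj1 (HF b))). lra.
  - intros a. destruct (diam_far_point d Hd U DU HDU HDU0 (F a)) as (u & Hu & Hfar).
    assert (Eu : F (f u) = u) by (apply Hinj; [apply HF|exact Hu|apply HF]).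
    exists (f u). split.
    + intros E. rewrite E, Eu, (dist_xx d Hd) in Hfar. lra.
    + rewrite Eu. apply Rdiv_ge_iff; [exact Hlam|].
      assert (lam / C / 4 = / (4 * C) * lam) by (field; lra). lra.
  - intros a b. pose proof (Hg (F a) (F b)) as Hab.
    pose proof (HFball a). pose proof (HFball b). apply Rle_trans with del; [apply Hab; lra|lra].
  - intros a. rewrite <- Hgz.
    assert (Hc : d y0 y0 / lam < 3) by (rewrite (dist_xx d Hd); unfold Rdiv; lra).
    pose proof (HFball a). pose proof (Hg y0 (F a) Hc ltac:(lra)) as Ha.
    apply Rabs_le_bounds in Ha. lra.
Qed.

Lemma exists_tangent_approximant {X Z : Type} (d : X -> X -> R) (dZ : Z -> Z -> R) p eta etai
  (V D : X -> Prop) r0 C lam ps z :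
  is_metric d -> homeo_pair eta etai -> is_open d V -> V p -> dense_in d D V ->
  (forall x, D x -> comparable_self_qs_data d eta x r0 C) -> 0 < r0 -> 0 < C ->
  (forall n, 0 < lam n) -> Un_cv lam 0 -> Un_cv (fun n => d (ps n) p) 0 ->
  pGH_conv d lam ps dZ z ->
  forall eps, 0 < eps <= 1 ->
    exists phi rho, tangent_approximant d dZ z (eta_prime etai) C eps phi rho.
Proof.
  intros Hd Heta HV Vp Hdense Hdata Hr0 HC Hlam Hlam0 Hps Hgh eps Heps.
  destruct (HV p Vp) as (eV & HeV & HVball).
  destruct (Hlam0 r0 Hr0) as [N1 HN1], (Hps eV HeV) as [N2 HN2].
  destruct (Hgh 3 eps ltac:(lra) ltac:(lra)) as [N3 HN3].
  set (n := max N1 (max N2 N3)).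
  assert (Hlamn : lam n < r0) by (destruct (Rabs_def2 _ _ (HN1 n ltac:(lia))); lra).
  assert (Vn : V (ps n)).
  { apply HVball. rewrite (dist_sym d Hd). destruct (Rabs_def2 _ _ (HN2 n ltac:(lia))); lra. }
  destruct (Hdense (ps n) Vn (lam n) (Hlam n)) as (x & Dx & Hx).
  destruct (Hdata x Dx) as (_ & _ & Hx_data).
  destruct (Hx_data (lam n) (Hlam n) Hlamn) as (U & f & HU & _ & (DU & HDU & HDbounds) & Hf).
  destruct (HN3 n ltac:(lia)) as (g & Hgz & (del & Hdel & Hg) & _).
  apply (tangent_approximant_of_qs_copy d dZ z eta etai U f g (ps n) x (lam n) C DU eps del);
    auto; lra.
Qed.

Definition cauchy {Z : Type} (dZ : Z -> Z -> R) (u : nat -> Z) : Prop :=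
  forall e, 0 < e -> exists N, forall m n, (N <= m)%nat -> (N <= n)%nat -> dZ (u m) (u n) < e.

Definition unbounded (I : nat -> Prop) : Prop := forall N, exists k, (N <= k)%nat /\ I k.

Lemma unbounded_pigeonhole {A : Type} (T : list A) (P : A -> nat -> Prop) :
  unbounded (fun k => exists c, In c T /\ P c k) -> exists c, In c T /\ unbounded (P c).
Proof.
  induction T as [|a T IH]; intros H.
  - destruct (H 0%nat) as (k & _ & c & [] & _).
  - destruct (classic (unbounded (P a))) as [Ha|Ha]; [exists a; split; [left|]; auto|].
    apply not_all_ex_not in Ha. destruct Ha as [N0 HN0].
    destruct IH as (c & Hc & Hunb); [|exists c; split; [right|]; auto].
    intros N. destruct (H (max N N0)) as (k & Hk & c & [<-|Hc] & Pk).
    + exfalso. apply HN0. exists k. split; [lia|exact Pk].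
    + exists k. split; [lia|]. exists c. auto.
Qed.

Section Diagonal.
Context {X Z : Type} (dZ : Z -> Z -> R) (B : Z -> Prop) (phi : nat -> X -> Z).
Hypotheses (HdZ : is_metric dZ) (HB : totally_bounded dZ B) (Hrange : forall k a, B (phi k a)).

Definition clusters_on (l : list X) (e : R) (I : nat -> Prop) : Prop :=
  forall q, In q l -> exists c, forall k, I k -> dZ c (phi k q) < e.

Definition refines (l : list X) (e : R) (I J : nat -> Prop) : Prop :=
  (forall k, J k -> I k) /\ unbounded J /\ clusters_on l e J.

Lemma exists_refinement l e I : 0 < e -> unbounded I -> exists J, refines l e I J.
Proof.
  intros He HI. induction l as [|q l IH].
  - exists I. repeat split; auto. intros q [].
  - destruct IH as (J & HJI & HJ & Hcl). destruct (HB e He) as [T HT].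
    destruct (unbounded_pigeonhole T (fun c k => J k /\ dZ c (phi k q) < e)) as (c & _ & Hc).
    { intros N. destruct (HJ N) as (k & Hk & Jk).
      destruct (HT (phi k q) (Hrange k q)) as (c & ? & ?).
      exists k. split; [exact Hk|]. exists c. auto. }
    exists (fun k => J k /\ dZ c (phi k q) < e). split; [|split].
    + intros k [Jk _]. auto.
    + exact Hc.
    + intros q' [<-|Hq']; [exists c; tauto|].
      destruct (Hcl q' Hq') as [c' Hc']. exists c'. intros k [Jk _]. auto.
Qed.

Definition refinement (l : list X) (e : R) (I : nat -> Prop) : nat -> Prop :=
  epsilon (inhabits I) (refines l e I).

Variable nets : nat -> list X.

Definition nets_upto (m : nat) : list X := flat_map nets (seq 0 (S m)).

Fixpoint stage (m : nat) : nat -> Prop :=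
  refinement (nets_upto m) (/ (INR m + 1))
    (match m with O => fun _ => True | S m' => stage m' end).

Lemma stage_refines m :
  refines (nets_upto m) (/ (INR m + 1)) (match m with O => fun _ => True | S m' => stage m' end)
    (stage m).
Proof.
  induction m as [|m IH]; cbn [stage]; unfold refinement;
    apply epsilon_spec, exists_refinement; try apply RinvN_pos.
  - intros N. exists N. auto.
  - apply IH.
Qed.

Lemma stage_antitone m n : (m <= n)%nat -> forall k, stage n k -> stage m k.
Proof.
  induction 1 as [|n _ IH]; auto. intros k Hk. apply IH, (stage_refines (S n)), Hk.
Qed.

Definition diagonal (m : nat) : nat :=
  epsilon (inhabits 0%nat) (fun k => (m <= k)%nat /\ stage m k).

Lemma diagonal_spec m : (m <= diagonal m)%nat /\ stage m (diagonal m).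
Proof.
  unfold diagonal. apply epsilon_spec. destruct (stage_refines m) as (_ & Hunb & _). apply Hunb.
Qed.

Lemma diagonal_cauchy_on_nets j q : In q (nets j) -> cauchy dZ (fun m => phi (diagonal m) q).
Proof.
  intros Hq e He. destruct (inv_succ_small (e / 2) ltac:(lra)) as [N HN].
  set (M := max j N). exists M. intros m n Hm Hn.
  destruct (stage_refines M) as (_ & _ & Hcl).
  destruct (Hcl q) as [c Hc].
  { apply in_flat_map. exists j. split; [apply in_seq; lia|exact Hq]. }
  pose proof (Hc _ (stage_antitone M m Hm _ (proj2 (diagonal_spec m)))).
  pose proof (Hc _ (stage_antitone M n Hn _ (proj2 (diagonal_spec n)))).
  pose proof (inv_succ_le N M ltac:(lia)).
  pose proof (dist_tri dZ HdZ (phi (diagonal m) q) c (phi (diagonal n) q)).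
  rewrite (dist_sym dZ HdZ _ c) in H2. lra.
Qed.

End Diagonal.

Definition asymptotically_equicontinuous {X Z : Type} (d : X -> X -> R) (dZ : Z -> Z -> R)
  (phi : nat -> X -> Z) : Prop :=
  forall x e, 0 < e -> exists de N, 0 < de /\
    forall k y, (N <= k)%nat -> d x y < de -> dZ (phi k x) (phi k y) < e.

Lemma cauchy_of_cauchy_on_nets {X Z : Type} (d : X -> X -> R) (dZ : Z -> Z -> R)
  (phi : nat -> X -> Z) (sg : nat -> nat) (nets : nat -> list X) :
  is_metric d -> is_metric dZ -> asymptotically_equicontinuous d dZ phi ->
  (forall m, (m <= sg m)%nat) ->
  (forall j x, exists q, In q (nets j) /\ d q x < / (INR j + 1)) ->
  (forall j q, In q (nets j) -> cauchy dZ (fun m => phi (sg m) q)) ->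
  forall x, cauchy dZ (fun m => phi (sg m) x).
Proof.
  intros Hd HdZ Hequi Hsg Hnets Hcauchy x e He.
  destruct (Hequi x (e / 3) ltac:(lra)) as (de & N0 & Hde & Hclose).
  destruct (inv_succ_small de Hde) as [j Hj].
  destruct (Hnets j x) as (q & Hq & Hqx).
  destruct (Hcauchy j q Hq (e / 3) ltac:(lra)) as [N1 HN1].
  exists (max N0 N1). intros m n Hm Hn.
  rewrite (dist_sym d Hd) in Hqx.
  pose proof (Hclose (sg m) q ltac:(specialize (Hsg m); lia) ltac:(lra)).
  pose proof (Hclose (sg n) q ltac:(specialize (Hsg n); lia) ltac:(lra)).
  pose proof (HN1 m n ltac:(lia) ltac:(lia)).
  pose proof (dist_tri dZ HdZ (phi (sg m) x) (phi (sg m) q) (phi (sg n) x)).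
  pose proof (dist_tri dZ HdZ (phi (sg m) q) (phi (sg n) q) (phi (sg n) x)).
  rewrite (dist_sym dZ HdZ (phi (sg n) q)) in H3. lra.
Qed.

Lemma pointwise_convergent_subsequence {X Z : Type} (d : X -> X -> R) (dZ : Z -> Z -> R)
  (B : Z -> Prop) (phi : nat -> X -> Z) :
  is_metric d -> is_metric dZ -> complete dZ ->
  totally_bounded d (fun _ => True) -> totally_bounded dZ B -> (forall k a, B (phi k a)) ->
  asymptotically_equicontinuous d dZ phi ->
  exists (sg : nat -> nat) (f : X -> Z), (forall m, (m <= sg m)%nat) /\
    forall x, Un_cv (fun m => dZ (phi (sg m) x) (f x)) 0.
Proof.
  intros Hd HdZ Hcomplete HX HB Hrange Hequi.
  destruct (choice (fun j l => forall x, exists q, In q l /\ d q x < / (INR j + 1)))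
    as [nets Hnets].
  { intros j. destruct (HX (/ (INR j + 1)) (RinvN_pos j)) as [l Hl]. exists l. intros x. auto. }
  set (sg := diagonal dZ phi nets).
  assert (Hsg : forall m, (m <= sg m)%nat)
    by (intros m; apply (diagonal_spec dZ B phi HB Hrange nets)).
  assert (Hcauchy : forall x, cauchy dZ (fun m => phi (sg m) x)).
  { apply (cauchy_of_cauchy_on_nets d dZ phi sg nets Hd HdZ Hequi Hsg Hnets).
    intros j q Hq. apply (diagonal_cauchy_on_nets dZ B phi HdZ HB Hrange nets j q Hq). }
  destruct (choice (fun x l => forall e, 0 < e -> exists N, forall n, (N <= n)%nat ->
    dZ (phi (sg n) x) l < e)) as [f Hf].
  { intros x. apply Hcomplete, Hcauchy. }
  exists sg, f. split; [exact Hsg|]. intros x e He.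
  destruct (Hf x e He) as [N HN]. exists N. intros n Hn. unfold R_dist.
  rewrite Rminus_0_r, Rabs_right by (apply Rle_ge, (dist_ge0 dZ HdZ)). auto.
Qed.

Lemma cv_const (c : R) : Un_cv (fun _ => c) c.
Proof.
  intros e He. exists 0%nat. intros n _. unfold R_dist. rewrite Rminus_diag, Rabs_R0. exact He.
Qed.

Lemma cv_inv_succ (sg : nat -> nat) : (forall m, (m <= sg m)%nat) ->
  Un_cv (fun m => / (INR (sg m) + 1)) 0.
Proof.
  intros Hsg e He. destruct (inv_succ_small e He) as [N HN]. exists N. intros n Hn.
  unfold R_dist. rewrite Rminus_0_r, Rabs_right by (left; apply RinvN_pos).
  pose proof (inv_succ_le N (sg n) ltac:(specialize (Hsg n); lia)). lra.
Qed.

Lemma cv_of_dist_approx {Z : Type} (dZ : Z -> Z -> R) (u v : nat -> Z) a b (w eps : nat -> R) :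
  is_metric dZ -> Un_cv (fun m => dZ (u m) a) 0 -> Un_cv (fun m => dZ (v m) b) 0 ->
  (forall m, Rabs (w m - dZ (u m) (v m)) <= eps m) -> Un_cv eps 0 -> Un_cv w (dZ a b).
Proof.
  intros HdZ Hu Hv Hw Heps e He.
  destruct (Hu (e / 3) ltac:(lra)) as [N1 HN1], (Hv (e / 3) ltac:(lra)) as [N2 HN2].
  destruct (Heps (e / 3) ltac:(lra)) as [N3 HN3].
  exists (max N1 (max N2 N3)). intros n Hn.
  destruct (Rabs_def2 _ _ (HN1 n ltac:(lia))), (Rabs_def2 _ _ (HN2 n ltac:(lia))),
    (Rabs_def2 _ _ (HN3 n ltac:(lia))).
  pose proof (Rabs_le_bounds _ _ (Hw n)).
  pose proof (dist_tri dZ HdZ (u n) a (v n)). pose proof (dist_tri dZ HdZ a b (v n)).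
  pose proof (dist_tri dZ HdZ a (u n) b). pose proof (dist_tri dZ HdZ (u n) (v n) b).
  rewrite (dist_sym dZ HdZ a (u n)) in *. rewrite (dist_sym dZ HdZ b (v n)) in *.
  unfold R_dist. apply Rabs_def1; lra.
Qed.

Lemma qs_embedding_of_bounds {X Z : Type} (d : X -> X -> R) (dZ : Z -> Z -> R) eta etai
  (f : X -> Z) (C M lo : R) :
  is_metric d -> is_metric dZ -> homeo_pair eta etai -> 0 < C -> 0 < M -> 0 < lo ->
  (forall a b, d a b <= M) ->
  qs_dominated d (eta_prime etai) (fun a b => dZ (f a) (f b)) ->
  (forall a b, dZ (f a) (f b) <= C) ->
  (forall a b, a <> b -> lo <= eta_prime etai (M / d a b) * dZ (f a) (f b)) ->
  qs_embedding d dZ (fun _ => True) f (eta_prime etai).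
Proof.
  intros Hd HdZ Heta HC HM0 Hlo HM Hqs Hle Hlow.
  assert (HfM : forall a b, a <> b -> 0 < eta_prime etai (M / d a b))
    by (intros a b Hab; apply (eta_prime_pos eta etai Heta), Rdiv_lt_0_compat;
        [exact HM0|apply (dist_pos d Hd), Hab]).
  assert (Hpos : forall a b, a <> b -> 0 < dZ (f a) (f b)).
  { intros a b Hab. pose proof (Hlow a b Hab). pose proof (HfM a b Hab).
    destruct (dist_ge0 dZ HdZ (f a) (f b)) as [|E]; [auto|rewrite <- E in H; lra]. }
  split; [|split; [|split]].
  - intros a b _ _ E. apply NNPP. intros Hab. pose proof (Hpos a b Hab).
    rewrite E, (dist_xx dZ HdZ) in H. lra.
  - intros x _ e He. destruct (classic (exists c, x <> c)) as [(c & Hxc)|Hsingle].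
    + destruct (qs_dominated_small d eta etai C x c Hd Heta HC Hxc e He) as (de & Hde & Hsmall).
      exists de. split; [exact Hde|]. intros y _ Hxy. exact (Hsmall _ Hqs Hle y Hxy).
    + exists 1. split; [lra|]. intros y _ _.
      assert (x = y) by (apply NNPP; intros Hxy; apply Hsingle; exists y; exact Hxy).
      subst y. rewrite (dist_xx dZ HdZ). exact He.
  - intros x _ e He.
    assert (HMe : 0 < eta_prime etai (M / e))
      by (apply (eta_prime_pos eta etai Heta), Rdiv_lt_0_compat; assumption).
    exists (lo / eta_prime etai (M / e)). split; [apply Rdiv_lt_0_compat; assumption|].
    intros y _ Hfxy. apply Rnot_le_lt. intros Hexy.
    assert (Hxy : x <> y) by (intros <-; rewrite (dist_xx d Hd) in Hexy; lra).
    assert (eta_prime etai (M / d x y) <= eta_prime etai (M / e)).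
    { apply (eta_prime_le eta etai Heta); [apply Rdiv_lt_0_compat; lra|].
      apply Rmult_le_compat_l; [lra|]. apply Rinv_le_contravar; assumption. }
    apply (Rmult_lt_compat_r _ _ _ HMe) in Hfxy.
    replace (lo / eta_prime etai (M / e) * eta_prime etai (M / e)) with lo in Hfxy by (field; lra).
    pose proof (Hlow x y Hxy).
    pose proof (Rmult_le_compat_r _ _ _ (dist_ge0 dZ HdZ (f x) (f y)) H). lra.
  - intros x y w _ _ _ Hxw. pose proof (Hpos x w Hxw).
    apply Rdiv_le_iff; [exact H|]. apply Hqs, Hxw.
Qed.

Section LimitOfApproximants.
Context {X Z : Type} (d : X -> X -> R) (dZ : Z -> Z -> R) (z : Z) (eta etai : R -> R) (C M : R).
Hypotheses (Hd : is_metric d) (HdZ : is_metric dZ) (Heta : homeo_pair eta etai) (HC : 0 < C)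
  (HM : forall a b, d a b <= M).

Lemma approximant_lower_bound phi rho eps :
  tangent_approximant d dZ z (eta_prime etai) C eps phi rho ->
  forall a b, a <> b -> / (4 * C) <= eta_prime etai (M / d a b) * rho a b.
Proof.
  intros (Hge0 & Hqs & _ & Hfar & _) a b Hab.
  destruct (Hfar a) as (c & Hac & Hc).
  assert (Hdab : 0 < d a b) by (apply (dist_pos d Hd), Hab).
  assert (Hdac : 0 < d a c) by (apply (dist_pos d Hd), Hac).
  assert (eta_prime etai (d a c / d a b) <= eta_prime etai (M / d a b)).
  { apply (eta_prime_le eta etai Heta); [apply Rdiv_lt_0_compat; auto|].
    apply Rmult_le_compat_r; [left; apply Rinv_0_lt_compat, Hdab|apply HM]. }
  pose proof (Hqs a c b Hab). pose proof (Hge0 a b).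
  pose proof (Rmult_le_compat_r (rho a b) _ _ (Hge0 a b) H). lra.
Qed.

Lemma approximants_equicontinuous (phi : nat -> X -> Z) (rho : nat -> X -> X -> R) :
  (forall k, tangent_approximant d dZ z (eta_prime etai) C (/ (INR k + 1)) (phi k) (rho k)) ->
  asymptotically_equicontinuous d dZ phi.
Proof.
  intros Happrox x e He.
  destruct (Happrox 0%nat) as (_ & _ & _ & Hfar & _). destruct (Hfar x) as (c & Hxc & _).
  destruct (qs_dominated_small d eta etai C x c Hd Heta HC Hxc (e / 2)) as (de & Hde & Hsmall);
    [lra|].
  destruct (inv_succ_small (e / 2) ltac:(lra)) as [N HN].
  exists de, N. split; [exact Hde|]. intros k y Hk Hxy.
  destruct (Happrox k) as (_ & Hqs & Hle & _ & Hclose & _).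
  pose proof (Hsmall (rho k) Hqs Hle y Hxy).
  pose proof (Rabs_le_bounds _ _ (Hclose x y)). pose proof (inv_succ_le N k Hk). lra.
Qed.

Lemma qs_embedding_of_approximants (phi : nat -> X -> Z) (rho : nat -> X -> X -> R) :
  complete dZ -> 0 < M -> totally_bounded d (fun _ => True) ->
  totally_bounded dZ (fun w => dZ z w < 3) ->
  (forall k, tangent_approximant d dZ z (eta_prime etai) C (/ (INR k + 1)) (phi k) (rho k)) ->
  exists f, qs_embedding d dZ (fun _ => True) f (eta_prime etai).
Proof.
  intros Hcomplete HM0 HX HZ Happrox.
  destruct (pointwise_convergent_subsequence d dZ _ phi Hd HdZ Hcomplete HX HZ)
    as (sg & f & Hsg & Hf).
  { intros k a. apply (Happrox k). }
  { apply (approximants_equicontinuous phi rho Happrox). }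
  assert (Hlim : forall a b, Un_cv (fun m => rho (sg m) a b) (dZ (f a) (f b))).
  { intros a b.
    apply (cv_of_dist_approx dZ _ _ (f a) (f b) _ (fun m => / (INR (sg m) + 1)) HdZ (Hf a) (Hf b)).
    - intros m. rewrite Rabs_minus_sym. apply (Happrox (sg m)).
    - apply cv_inv_succ, Hsg. }
  exists f. apply (qs_embedding_of_bounds d dZ eta etai f C M (/ (4 * C)) Hd HdZ Heta HC HM0);
    [apply Rinv_0_lt_compat; lra|exact HM| | |].
  - intros a b c Hac.
    apply Rle_cv_lim with (Un := fun m => rho (sg m) a b)
      (Vn := fun m => eta_prime etai (d a b / d a c) * rho (sg m) a c).
    + intros m. destruct (Happrox (sg m)) as (_ & Hqs & _). apply Hqs, Hac.
    + apply Hlim.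
    + apply CV_mult; [apply cv_const|apply Hlim].
  - intros a b. apply Rle_cv_lim with (Un := fun m => rho (sg m) a b) (Vn := fun _ => C).
    + intros m. apply (Happrox (sg m)).
    + apply Hlim.
    + apply cv_const.
  - intros a b Hab.
    apply Rle_cv_lim with (Un := fun _ => / (4 * C))
      (Vn := fun m => eta_prime etai (M / d a b) * rho (sg m) a b).
    + intros m. apply (approximant_lower_bound _ _ _ (Happrox (sg m)) a b Hab).
    + apply cv_const.
    + apply CV_mult; [apply cv_const|apply Hlim].
Qed.

End LimitOfApproximants.

Theorem corollary5p1 (X : Type) (d : X -> X -> R) (p : X) (eta etai : R -> R) :
  is_metric d -> proper d -> doubling d -> homeo_pair eta etai ->
  (exists V : X -> Prop, is_open d V /\ V p /\
     exists D : X -> Prop, (forall x, D x -> V x) /\ dense_in d D V /\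
       unif_comparable_self_qs d eta D) ->
  forall (Z : Type) (dZ : Z -> Z -> R) (z : Z), weak_tangent d p dZ z ->
  exists f : X -> Z, qs_embedding d dZ (fun _ => True) f (eta_prime etai).
Proof.
  intros Hd Hproper _ Heta (V & HV & Vp & D & _ & Hdense & r0 & C & Hdata) Z dZ z
    (HdZ & Hcomplete & lam & ps & Hlam & Hlam0 & Hps & Hgh).
  destruct (Hdense p Vp 1 Rlt_0_1) as (x0 & Dx0 & _).
  destruct (self_qs_bounded d eta etai x0 r0 C Hd Heta (Hdata x0 Dx0)) as (M & HM0 & HM).
  destruct (Hdata x0 Dx0) as (Hr0 & HC & _).
  destruct (choice (fun k approx => tangent_approximant d dZ z (eta_prime etai) C
      (/ (INR k + 1)) (fst approx) (snd approx))) as [approx Happrox].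
  { intros k.
    destruct (exists_tangent_approximant d dZ p eta etai V D r0 C lam ps z Hd Heta HV Vp Hdense
      Hdata Hr0 HC Hlam Hlam0 Hps Hgh (/ (INR k + 1))) as (phi & rho & Hk).
    - pose proof (inv_succ_le 0 k (Nat.le_0_l k)). simpl INR in H.
      rewrite Rplus_0_l, Rinv_1 in H. split; [apply RinvN_pos|exact H].
    - exists (phi, rho). exact Hk. }
  apply (qs_embedding_of_approximants d dZ z eta etai C M Hd HdZ Heta HC HM
    (fun k => fst (approx k)) (fun k => snd (approx k)) Hcomplete HM0).
  - apply (bounded_proper_totally_bounded d Hd p M Hproper HM).
  - apply (pGH_ball_totally_bounded d dZ lam ps z Hd Hproper HdZ Hlam Hgh 3); lra.
  - exact Happrox.
Qed.
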